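(* Let $A^{(n)}_k$ be Knuth's Faulhaber coefficients, defined by $$\sum_{n\ge1}\sum_{k=0}^{n-1}\frac{x^{2n}}{(2n)!}A^{(n)}_k y^{k}=\left(\frac{x\sqrt y}{2}\right)\frac{\cosh\!\left(\tfrac12 x\sqrt{y+4}\right)-\cosh\!\left(\tfrac12 x\sqrt y\right)}{\sinh\!\left(\tfrac12 x\sqrt y\right)},$$ and for $n\ge k\ge2$ let $b(n,k)=(-1)^{n-k}A^{(n)}_{n-k}\frac{(k!)^2}{(2k+1)!}$. Then for all $n>2$ and $2\le k\le n-1$, $$b(n,k)>2\,b(n,k+1)\quad\text{and}\quad b(n,k)>\sum_{l=k+1}^{n}b(n,l),$$ and $b(n,k)>0$ for all $n\ge k\ge2$. *)

From mathcomp Require Import all_boot all_order all_algebra.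
Set Implicit Arguments. Unset Strict Implicit. Unset Printing Implicit Defensive.
Import Order.TTheory GRing.Theory Num.Theory.
Local Open Scope ring_scope.

(* With u = x sqrt y / 2 and v = x sqrt(y+4) / 2 we have u^2 = x^2 y/4,
   v^2 = x^2 (y+4)/4, so
     cosh v - cosh u = sum_j x^(2j) ((y+4)^j - y^j) / (4^j (2j)!),
     u / sinh u      = sum_i c_i x^(2i) y^i / 4^i,
   where (c_i) is the reciprocal of the power series
     sinh(u)/u = sum_j u^(2j)/(2j+1)!  (in the variable u^2). *)

(* first m+1 coefficients of the reciprocal of sum_j t^j/(2j+1)! *)
Fixpoint sinhc_inv_seq (m : nat) : seq rat :=
  match m with
  | 0 => [:: 1]
  | m'.+1 =>
      let s := sinhc_inv_seq m' in
      rcons s (- \sum_(i < m'.+1) s`_i / ((2 * (m'.+1 - i)).+1)`!%:R)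
  end.

Definition sinhc_inv (m : nat) : rat := (sinhc_inv_seq m)`_m.

(* coefficient of x^(2n) in the generating function, as a polynomial in y *)
Definition faulhaber_gf_coef (n : nat) : {poly rat} :=
  \sum_(i < n.+1)
     ((sinhc_inv i / 4%:R ^+ i) *: 'X^i) *
     ((('X + 4%:R%:P) ^+ (n - i) - 'X ^+ (n - i))
        * ((4%:R ^+ (n - i) * (2 * (n - i))`!%:R)^-1)%:P).

Definition faulhaberA (n k : nat) : rat := (2 * n)`!%:R * (faulhaber_gf_coef n)`_k.

Definition bnk (n k : nat) : rat :=
  (-1) ^+ (n - k) * faulhaberA n (n - k) * (k`! ^ 2)%:R / ((2 * k).+1)`!%:R.

From mathcomp Require Import all_boot all_order all_algebra.
From mathcomp Require Import ring lra zify.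
Set Implicit Arguments. Unset Strict Implicit. Unset Printing Implicit Defensive.
Import Order.TTheory GRing.Theory Num.Theory.
Local Open Scope ring_scope.

(* Expanding the generating function gives b(n,k) = w(n,k) beta(n,k), with an
   explicit weight w(n,k) > 0 and beta(n,k) = (-1)^(n-k) sum_i c_i C(n-i,k)/(2(n-i))!,
   where (c_i) are the coefficients of u / sinh u.  Pascal-type binomial identities
   give the recursion
     (4k+2)(k+1) beta(n+1,k+1) = beta(n,k) + 4(k+1)(k+2) beta(n+1,k+2),
   with boundary values beta(n,n) = 1/(2n)!, beta(n,n+1) = 0, and beta(n,1) = 0
   because (c_i) is the reciprocal of sinh u / u.  Induction on n, and downwards
   on k, shows beta(n,k) > 0 and 4(k+1) beta(n,k+1) < (2k+3) beta(n,k) for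
   2 <= k <= n.  Since w(n,k+1)/w(n,k) = (2k+2)/(2k+3), this says b(n,k) > 2 b(n,k+1),
   and the tail bound is then a geometric series estimate. *)

Lemma size_sinhc_inv_seq m : size (sinhc_inv_seq m) = m.+1.
Proof. by elim: m => [|m IHm] //=; rewrite size_rcons IHm. Qed.

Lemma nth_sinhc_inv_seq m i : (i <= m)%N -> (sinhc_inv_seq m)`_i = sinhc_inv i.
Proof.
move=> /subnKC <-; elim: (m - i)%N => [|d IHd]; first by rewrite addn0.
by rewrite addnS /= nth_rcons size_sinhc_inv_seq ltnS leq_addr.
Qed.

Lemma sinhc_inv0 : sinhc_inv 0 = 1. Proof. by []. Qed.

Lemma sinhc_inv_conv m :
  \sum_(i < m.+2) sinhc_inv i / (2 * (m.+1 - i)).+1`!%:R = 0.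
Proof.
rewrite big_ord_recr /= subnn divr1 {2}/sinhc_inv /=.
rewrite nth_rcons size_sinhc_inv_seq ltnn eqxx.
by apply/eqP; rewrite subr_eq0; apply/eqP/eq_bigr => i _; rewrite nth_sinhc_inv_seq // -ltnS.
Qed.

Lemma natf_fact_neq0 (R : numDomainType) n : n`!%:R != 0 :> R.
Proof. by rewrite pnatr_eq0 -lt0n fact_gt0. Qed.

Definition fsum n k : rat :=
  \sum_(i < n.+1) sinhc_inv i * 'C(n - i, k)%:R / (2 * (n - i))`!%:R.

Lemma fsum_small n k : (n < k)%N -> fsum n k = 0.
Proof.
move=> ltnk; rewrite /fsum big1 // => i _.
by rewrite bin_small ?mulr0 ?mul0r // (leq_ltn_trans (leq_subr _ _)).
Qed.

Lemma fsum_diag n : fsum n n = (2 * n)`!%:R^-1.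
Proof.
rewrite /fsum big_ord_recl subn0 binn sinhc_inv0 mul1r div1r big1 ?addr0 // => i _.
by rewrite bin_small ?mulr0 ?mul0r // lift0 ltn_subrL /= (leq_ltn_trans _ (ltn_ord i)).
Qed.

Lemma fsum1 n : (1 < n)%N -> fsum n 1 = 0.
Proof.
case: n => [|[|m]] // _.
have halve t : t.+1%:R / (2 * t.+1)`!%:R = (2 * t).+1`!%:R^-1 / 2 :> rat.
  rewrite [(2 * t.+1)%N]mulnS [(2 + _)`!]factS natrM; field.
  by rewrite natf_fact_neq0 -natrM -natrD pnatr_eq0.
rewrite /fsum big_ord_recr /= subnn bin0n mulr0 mul0r addr0.
under eq_bigr => i _ do rewrite (@subSn i m.+1 (ltn_ord i)) bin1 -mulrA halve mulrA.
by rewrite -mulr_suml sinhc_inv_conv mul0r.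
Qed.

Lemma bin_fsum_rec N k :
  (4 * k.+1 * k.+2 * 'C(N.+1, k.+2) + (4 * k + 2) * k.+1 * 'C(N.+1, k.+1)
   = (2 * N).+2 * (2 * N).+1 * 'C(N, k))%N.
Proof.
rewrite -!mulnA -!mul_bin_diag /= [(k.+1 * _)%N]mulnCA mul_bin_left.
have [leqkN | ltNk] := leqP k N; last by rewrite bin_small // !muln0.
by move: (N - k)%N (subnKC leqkN) => d <-; ring.
Qed.

Lemma fsum_rec n k :
  fsum n k = (4 * k.+1 * k.+2)%:R * fsum n.+1 k.+2 + ((4 * k + 2) * k.+1)%:R * fsum n.+1 k.+1.
Proof.
rewrite /fsum !(big_ord_recr n.+1) /= subnn !bin0n !mulr0 !mul0r !addr0.
rewrite !mulr_sumr -big_split; apply: eq_bigr => i _ /=.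
rewrite (@subSn i n (ltn_ord i)); set N := (n - i)%N; set c := sinhc_inv i.
have factSS : (2 * N.+1)`! = ((2 * N).+2 * (2 * N).+1 * (2 * N)`!)%N.
  by rewrite mulnS !factS mulnA.
rewrite factSS !mulrA -mulrDl !(mulrAC _ c) -mulrDl -!natrM -natrD bin_fsum_rec !natrM; field.
by rewrite natf_fact_neq0 -!natrM nat1r -natrD !pnatr_eq0 addn_eq0.
Qed.

Lemma coef_XaddC_expr (R : comNzRingType) (a : R) j t :
  (('X + a%:P) ^+ j)`_t = a ^+ (j - t) * 'C(j, t)%:R.
Proof.
elim: j t => [|j IHj] [|t]; rewrite ?expr0 ?coef1 ?bin0 ?bin0n ?subn0 ?mulr1 ?mul1r //.
  by rewrite exprSr mulrDr coefD coefMX coefMC IHj add0r bin0 subn0 mulr1 exprSr.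
rewrite exprSr mulrDr coefD coefMX coefMC !IHj binS natrD mulrDr addrC.
congr (_ + _); have [ltt | lejt] := ltnP t j; first by rewrite subSS mulrAC -exprSr subnSK.
by rewrite !bin_small ?mulr0 ?mul0r // ltnS.
Qed.

Lemma faulhaber_gf_coefE n k : (0 < k <= n)%N ->
  (faulhaber_gf_coef n)`_(n - k) = 4%:R ^+ k / 4%:R ^+ n * fsum n k.
Proof.
move=> /andP[k_gt0 lekn].
rewrite /faulhaber_gf_coef coef_sum /fsum mulr_sumr; apply: eq_bigr => i _.
have lein := ltn_ord i; rewrite ltnS in lein.
rewrite -scalerAl coefZ coefXnM; case: ltnP => hik.
  by rewrite bin_small ?(mulr0, mul0r) //; lia.
rewrite coefMC coefB coefXn coef_XaddC_expr.
have -> : (n - k - i == n - i)%N = false by apply/negbTE; lia.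
have -> : (n - k - i = n - i - k)%N by lia.
have leki : (k <= n - i)%N by lia.
rewrite subr0 subKn // bin_sub //.
have -> : 4%:R ^+ n = 4%:R ^+ i * 4%:R ^+ (n - i) :> rat by rewrite -exprD subnKC.
field; by rewrite natf_fact_neq0 !expf_neq0 // pnatr_eq0.
Qed.

Definition bnk_weight n k : rat :=
  (2 * n)`!%:R * (4%:R ^+ k / 4%:R ^+ n) * (k`! ^ 2)%:R / (2 * k).+1`!%:R.

Definition beta n k : rat := (-1) ^+ (n - k) * fsum n k.

Lemma bnkE n k : (0 < k <= n)%N -> bnk n k = bnk_weight n k * beta n k.
Proof.
by move=> kn; rewrite /bnk /faulhaberA faulhaber_gf_coefE // /bnk_weight /beta; ring.
Qed.

Lemma bnk_weight_gt0 n k : 0 < bnk_weight n k.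
Proof. by rewrite !(divr_gt0, mulr_gt0) ?exprn_gt0 ?ltr0n ?expn_gt0 ?fact_gt0. Qed.

Lemma bnk_weightS n k :
  bnk_weight n k.+1 = bnk_weight n k * (2 * k%:R + 2) / (2 * k%:R + 3).
Proof.
rewrite /bnk_weight [(2 * k.+1)%N]mulnS !factS exprS !natrM; field.
have k_ge0 : 0 <= k%:R :> rat := ler0n _ k.
by rewrite natf_fact_neq0 expf_neq0 ?pnatr_eq0 // !lt0r_neq0 //; lra.
Qed.

Lemma beta_diag n : beta n n = (2 * n)`!%:R^-1.
Proof. by rewrite /beta subnn expr0 mul1r fsum_diag. Qed.

Lemma beta_small n : beta n n.+1 = 0.
Proof. by rewrite /beta fsum_small ?mulr0. Qed.

Lemma beta1 n : (1 < n)%N -> beta n 1 = 0.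
Proof. by move=> lt1n; rewrite /beta fsum1 ?mulr0. Qed.

Lemma beta_rec n k : (k <= n)%N ->
  (4 * k%:R + 2) * (k%:R + 1) * beta n.+1 k.+1
  = beta n k + 4 * (k%:R + 1) * (k%:R + 2) * beta n.+1 k.+2.
Proof.
rewrite leq_eqVlt /beta subSS (fsum_rec n k) => /predU1P[-> | ltkn].
  by rewrite [fsum n.+1 n.+2]fsum_small // subnn; ring.
by rewrite subSS -(subnSK ltkn) exprS; ring.
Qed.

Definition beta_ratio_bound N j : Prop :=
  0 < beta N j /\ 4 * j.+1%:R * beta N j.+1 < (2 * j%:R + 3) * beta N j.

(* [x, y, z] stand for [beta (N+1) (K+1..K+3)] and [p, q] for [beta N (K..K+1)]. *)
Lemma ratio_bound_step (R : realDomainType) (K x y z p q : R) : 2 <= K ->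
  0 < p -> 4 * (K + 1) * q < (2 * K + 3) * p ->
  0 < y -> 4 * (K + 3) * z < (2 * K + 7) * y ->
  (4 * K + 2) * (K + 1) * x = p + 4 * (K + 1) * (K + 2) * y ->
  (4 * K + 6) * (K + 2) * y = q + 4 * (K + 2) * (K + 3) * z ->
  0 < x /\ 4 * (K + 2) * y < (2 * K + 5) * x.
Proof.
move=> K2 p_gt0 pq y_gt0 yz Ex Ey.
have c_gt0 : 0 < (4 * K + 2) * (K + 1) by rewrite mulr_gt0 //; lra.
have ABy_gt0 : 0 < (K + 1) * (K + 2) * y by rewrite !mulr_gt0 //; lra.
have q_lb : (K + 2) * (2 * K - 1) * y < q by nra.
have p_lb : 4 * (K + 1) * (K + 2) * (2 * K - 3) * y < (2 * K + 5) * p.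
  suff : 4 * (K + 1) * ((K + 2) * (2 * K - 1) * y) < 4 * (K + 1) * q by lra.
  by rewrite ltr_pM2l //; lra.
split; first by rewrite -(pmulr_rgt0 _ c_gt0) Ex; lra.
by rewrite -(ltr_pM2l c_gt0) [X in _ < X]mulrCA Ex; lra.
Qed.

Lemma beta_ratio_bound_diag N : beta_ratio_bound N N.
Proof.
have beta_gt0 : 0 < beta N N by rewrite beta_diag invr_gt0 ltr0n fact_gt0.
have N_ge0 : 0 <= N%:R :> rat := ler0n _ N.
by split; rewrite // beta_small mulr0 mulr_gt0 //; lra.
Qed.

Lemma beta_ratio_bound_succ N :
  (forall j, (2 <= j)%N -> (j <= N)%N -> beta_ratio_bound N j) ->
  forall j, (2 <= j)%N -> (j <= N.+1)%N -> beta_ratio_bound N.+1 j.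
Proof.
move=> IHN; suff bound_at d j : (2 <= j)%N -> (j + d = N.+1)%N -> beta_ratio_bound N.+1 j.
  by move=> j le2j lejN; apply: (bound_at (N.+1 - j)%N); rewrite ?subnKC.
elim: d j => [|d IHd] j le2j; first by rewrite addn0 => ->; exact: beta_ratio_bound_diag.
case: j le2j => [|k] // le1k; rewrite -addSnnS => def_N.
have [y_gt0 yz] := IHd k.+2 isT def_N.
have ltkN : (k < N)%N by lia.
have Ex := beta_rec (ltnW ltkN); have Ey := beta_rec ltkN.
have [ltk2 | le2k] := ltnP k 2.
  have k1 : k = 1%N by apply/eqP; rewrite eqn_leq -ltnS ltk2.
  subst k; move: Ex; rewrite beta1 // => Ex.
  by split; lra.
have [p_gt0 pq] := IHN k le2k (ltnW ltkN).
have [x_gt0 xy] : 0 < beta N.+1 k.+1 /\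
    4 * (k%:R + 2) * beta N.+1 k.+2 < (2 * k%:R + 5) * beta N.+1 k.+1.
  by apply: (ratio_bound_step (z := beta N.+1 k.+3) (q := beta N k.+1) _ p_gt0 _ y_gt0 _ Ex);
    rewrite ?ler_nat //; lra.
by split=> //; lra.
Qed.

Lemma beta_ratio_bound_holds N j : (2 <= j)%N -> (j <= N)%N -> beta_ratio_bound N j.
Proof.
elim: N j => [|N IHN] j; first by move=> le2j /(leq_trans le2j).
exact: beta_ratio_bound_succ.
Qed.

Lemma bnk_gt0 n k : (2 <= k <= n)%N -> 0 < bnk n k.
Proof.
move=> /andP[le2k lekn].
rewrite bnkE ?(ltnW le2k) // mulr_gt0 ?bnk_weight_gt0 //.
exact: (beta_ratio_bound_holds le2k lekn).1.
Qed.

Lemma bnk_halves n k : (2 <= k < n)%N -> 2 * bnk n k.+1 < bnk n k.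
Proof.
move=> /andP[le2k ltkn]; have lekn := ltnW ltkn.
have [_ ratio] := beta_ratio_bound_holds le2k lekn.
have k_ge0 : 0 <= k%:R :> rat := ler0n _ k.
rewrite !bnkE ?(ltnW le2k) ?lekn ?ltkn // bnk_weightS.
rewrite [ltLHS](_ : _ = bnk_weight n k * (2 * ((2 * k%:R + 2) * beta n k.+1) / (2 * k%:R + 3))).
  by rewrite ltr_pM2l ?bnk_weight_gt0 // ltr_pdivrMr; lra.
by ring.
Qed.

Lemma sum_halving_lt (R : realDomainType) (f : nat -> R) k n : (k < n)%N ->
  (forall l, (k <= l)%N -> (l < n)%N -> 2 * f l.+1 < f l) ->
  \sum_(k.+1 <= l < n.+1) f l + f n < f k.
Proof.
elim: n => [// | n IHn]; rewrite ltnS => lekn halves.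
rewrite big_nat_recr //=.
have halves_n := halves n lekn (ltnSn n).
move: lekn; rewrite leq_eqVlt => /predU1P[-> | ltkn].
  by rewrite big_geq // add0r; lra.
suff : \sum_(k.+1 <= l < n.+1) f l + f n < f k by lra.
by apply: IHn => // l lekl ltln; apply: halves; rewrite // ltnW.
Qed.

Theorem mainTheorem7 :
  (forall n k : nat, (2 < n)%N -> (2 <= k <= n.-1)%N ->
     2%:R * bnk n k.+1 < bnk n k /\
     \sum_(k.+1 <= l < n.+1) bnk n l < bnk n k) /\
  (forall n k : nat, (2 <= k <= n)%N -> 0 < bnk n k).
Proof.
split=> [n k lt2n /andP[le2k lekn1] | ]; last exact: bnk_gt0.
have ltkn : (k < n)%N by lia.
have halves l : (k <= l)%N -> (l < n)%N -> 2 * bnk n l.+1 < bnk n l.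
  by move=> lekl ltln; rewrite bnk_halves // ltln (leq_trans le2k lekl).
split; first exact: halves.
have := sum_halving_lt ltkn halves.
have : 0 < bnk n n by rewrite bnk_gt0 // leqnn (leq_trans le2k (ltnW ltkn)).
lra.
Qed.
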